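(* Let $G, G_1,\dots,G_m$ and $H_1,\dots,H_n$ be abelian groups with tiles $A \subset B \subset C \subset G$, $T_i \subset B_i \subset G_i$ ($1\le i\le m$) and $U_i \subset C_i \subset H_i$ ($1\le i\le n$), and let $d$ be a positive integer. Suppose that $B_1\times\dots\times B_m\times B$ is $(T_1,\dots,T_m,A)$-tilable and that $C_1\times\dots\times C_n\times C^d$ is $(U_1,\dots,U_n,B^{\times d})$-tilable. Then $B_1\times\dots\times B_m\times C_1\times\dots\times C_n\times C^d$ is $(T_1,\dots,T_m,U_1,\dots,U_n,A^{\times d})$-tilable.
   Context: A tile in an abelian group is a non-empty subset. Given abelian groups $K_1,\dots,K_r$ and tiles $V_j\subset K_j$, let $\mathsf{V}_j \subset K_1\times\dots\times K_r$ be the set of points whose $j$-th coordinate lies in $V_j$ and whose other coordinates are $0$. A copy of $V_j$ is a translate $\mathsf{V}_j + x$ with $x \in K_1\times\dots\times K_r$. A subset of $K_1\times\dots\times K_r$ is $(V_1,\dots,V_r)$-tilable if it is a disjoint union of copies of $V_1,\dots,V_r$. The notation $V^{\times e}$ in such a list stands for $e$ consecutive entries $V,\dots,V$ (corresponding to $e$ consecutive factors). *)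

From HB Require Import structures.
From mathcomp Require Import all_boot all_algebra.
Set Implicit Arguments. Unset Strict Implicit. Unset Printing Implicit Defensive.
Import GRing.Theory.
Local Open Scope ring_scope.

Definition subset_of (T : Type) := T -> Prop.

Definition prodpt (I : finType) (K : I -> zmodType) := forall i : I, K i.

Definition boxset (I : finType) (K : I -> zmodType)
  (V : forall i, subset_of (K i)) : subset_of (prodpt K) :=
  fun p => forall i, V i (p i).

(* The copy  (sV_j + x)  of the tile V j, where sV_j is the set of points whose
   j-th coordinate lies in V j and whose other coordinates are 0:
   p lies in it iff p - x lies in sV_j. *)
Definition copy (I : finType) (K : I -> zmodType)
  (V : forall i, subset_of (K i)) (j : I) (x : prodpt K) : subset_of (prodpt K) :=
  fun p => V j (p j - x j) /\ (forall k, k != j -> p k - x k = 0).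

Definition tilable (I : finType) (K : I -> zmodType)
  (V : forall i, subset_of (K i)) (S : subset_of (prodpt K)) : Prop :=
  exists (Ix : Type) (c : Ix -> I) (t : Ix -> prodpt K),
    (forall p, S p <-> exists a, copy V (c a) (t a) p) /\
    (forall a b p, copy V (c a) (t a) p -> copy V (c b) (t b) p -> a = b).

(* Concatenation of two families of groups / of subsets (list concatenation
   K_1,...,K_r followed by L_1,...,L_s, indexed by I + J). *)
Definition famS (I J : finType) (K : I -> zmodType) (L : J -> zmodType)
  : I + J -> zmodType :=
  fun s => match s with inl i => K i | inr j => L j end.

Definition tS (I J : finType) (K : I -> zmodType) (L : J -> zmodType)
  (V : forall i, subset_of (K i)) (W : forall j, subset_of (L j))
  : forall s, subset_of (famS K L s) :=
  fun s => match s as s0 return subset_of (famS K L s0) with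
           | inl i => V i | inr j => W j end.

(* Pull the given tiling of C_1 x ... x C_n x C^d back along the projection forgetting
   the G_i-coordinates; the preimage of B_1 x ... x B_m x C_1 x ... x C_n x C^d splits into
   pieces over the tiles.  Over a copy of U_j the piece is (B_1 x ... x B_m) x (that copy),
   tiled by one copy of U_j per point of the box.  Over a copy of B in the k-th factor C the
   piece is a translate of B_1 x ... x B_m x B sitting in the coordinates G_1, ..., G_m and
   the k-th G, and is tiled by the given (T_1, ..., T_m, A)-tiling. *)

From HB Require Import structures.
From mathcomp Require Import all_boot all_algebra.
From Stdlib Require Import ProofIrrelevance FunctionalExtensionality IndefiniteDescription.
Set Implicit Arguments. Unset Strict Implicit. Unset Printing Implicit Defensive.
Import GRing.Theory.
Local Open Scope ring_scope.

Definition disjoint_cover (T Ix : Type) (F : Ix -> subset_of T) (S : subset_of T) :=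
  (forall p, S p <-> exists a, F a p) /\ (forall a b p, F a p -> F b p -> a = b).

Lemma disjoint_cover_ext (T Ix : Type) (F F' : Ix -> subset_of T) (S S' : subset_of T) :
  (forall p, S p <-> S' p) -> (forall a p, F a p <-> F' a p) ->
  disjoint_cover F S -> disjoint_cover F' S'.
Proof.
move=> eS eF [covF disF]; split=> [p|a b p /eF Fa /eF Fb]; last exact: disF Fa Fb.
by rewrite -eS covF; split=> -[a /eF]; exists a.
Qed.

Lemma disjoint_cover_preimage (T T' Ix : Type) (f : T' -> T) (R : subset_of T')
    (F : Ix -> subset_of T) (S : subset_of T) :
  disjoint_cover F S ->
  disjoint_cover (fun a p => R p /\ F a (f p)) (fun p => R p /\ S (f p)).
Proof.
move=> [covF disF]; split=> [p|a b p [_ Fa] [_ Fb]]; last exact: disF Fa Fb.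
rewrite covF; split=> [[Rp [a Fa]]|[a [Rp Fa]]]; first by exists a.
by split=> //; exists a.
Qed.

Lemma disjoint_cover_points (T : Type) (S : subset_of T) :
  disjoint_cover (fun (a : {x | S x}) p => p = proj1_sig a) S.
Proof.
split=> [p|a b p -> eb]; last exact: eq_sig_hprop (fun _ => proof_irrelevance _) _ _ eb.
by split=> [Sp|[[x Sx] ->]] //; exists (exist _ p Sp).
Qed.

Lemma tilable_ext (I : finType) (K : I -> zmodType) (V : forall i, subset_of (K i))
    (S S' : subset_of (prodpt K)) :
  (forall p, S p <-> S' p) -> tilable V S -> tilable V S'.
Proof.
move=> eS [Ix [c [t cov]]]; exists Ix, c, t.
exact: disjoint_cover_ext eS (fun _ _ => iff_refl _) cov.
Qed.

Lemma tilable_bigcup (I : finType) (K : I -> zmodType) (V : forall i, subset_of (K i))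
    (Ix : Type) (F : Ix -> subset_of (prodpt K)) (S : subset_of (prodpt K)) :
  disjoint_cover F S -> (forall a, tilable V (F a)) -> tilable V S.
Proof.
move=> [covF disF] tilF.
pose tiling a (w : {Ix' : Type & ((Ix' -> I) * (Ix' -> prodpt K))%type}) :=
  disjoint_cover (fun b => copy V ((projT2 w).1 b) ((projT2 w).2 b)) (F a).
have [w tilw] : exists w, forall a, tiling a (w a).
  apply: functional_choice => a.
  by have [Ix' [c [t cov]]] := tilF a; exists (existT _ Ix' (c, t)).
have inF a b p : copy V ((projT2 (w a)).1 b) ((projT2 (w a)).2 b) p -> F a p.
  by move=> cp; apply/(tilw a).1; exists b.
exists {a : Ix & projT1 (w a)}.
exists (fun ab => (projT2 (w (projT1 ab))).1 (projT2 ab)).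
exists (fun ab => (projT2 (w (projT1 ab))).2 (projT2 ab)).
split=> [p|[a b] [a' b'] p /= cp cp'].
  rewrite covF; split=> [[a /(tilw a).1 [b cp]]|[[a b] /= cp]]; first by exists (existT _ a b).
  by exists a; exact: inF cp.
have eaa' := disF _ _ _ (inF _ _ _ cp) (inF _ _ _ cp'); subst a'.
by rewrite ((tilw a).2 _ _ _ cp cp').
Qed.

Section Regrouping.

Context {I J D : finType} {G : zmodType} {Gs : I -> zmodType} {Hs : J -> zmodType}.

Local Notation point := (prodpt (famS (famS Gs Hs) (fun _ : D => G))).
Local Notation rpoint := (prodpt (famS Hs (fun _ : D => G))).
Local Notation slab := (prodpt (famS Gs (fun _ : 'I_1 => G))).

Definition lpart (p : point) : prodpt Gs := fun i => p (inl (inl i)).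

Definition rpart (p : point) : rpoint :=
  fun s => match s as s0 return famS Hs (fun _ : D => G) s0 with
           | inl j => p (inl (inr j)) | inr k => p (inr k) end.

Definition join (b : prodpt Gs) (z : rpoint) : point :=
  fun s => match s as s0 return famS (famS Gs Hs) (fun _ : D => G) s0 with
           | inl (inl i) => b i | inl (inr j) => z (inl j) | inr k => z (inr k) end.

(* On the layer of points agreeing with [x] in all [Hs]- and [G]-coordinates but the
   [k]-th one, [slice k x] and [unslice k x] identify the whole space with [Gs * G],
   the [G]-coordinate being measured from [x]. *)
Definition slice (k : D) (x : rpoint) (p : point) : slab :=
  fun s => match s as s0 return famS Gs (fun _ : 'I_1 => G) s0 with
           | inl i => p (inl (inl i)) | inr _ => p (inr k) - x (inr k) end.

Definition unslice (k : D) (x : rpoint) (y : slab) : point :=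
  fun s => match s as s0 return famS (famS Gs Hs) (fun _ : D => G) s0 with
           | inl (inl i) => y (inl i)
           | inl (inr j) => x (inl j)
           | inr k' => if k' == k then x (inr k') + y (inr ord0) else x (inr k') end.

Definition slab_index (k : D) (c : I + 'I_1) : (I + J) + D :=
  match c with inl i => inl (inl i) | inr _ => inr k end.

Lemma boxset_split (Bs : forall i, subset_of (Gs i)) (Cs : forall j, subset_of (Hs j))
    (C : subset_of G) (p : point) :
  boxset (tS (tS Bs Cs) (fun _ : D => C)) p <->
  boxset Bs (lpart p) /\ boxset (tS Cs (fun _ : D => C)) (rpart p).
Proof.
split=> [Pp|[Lp Rp]]; first by split=> [i|[j|k]]; [exact: Pp (inl (inl i))
  | exact: Pp (inl (inr j)) | exact: Pp (inr k)].
by case=> [[i|j]|k]; [exact: Lp i | exact: Rp (inl j) | exact: Rp (inr k)].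
Qed.

Lemma boxset_slice (Bs : forall i, subset_of (Gs i)) (B : subset_of G) k x (p : point) :
  boxset (tS Bs (fun _ : 'I_1 => B)) (slice k x p) <->
  boxset Bs (lpart p) /\ B (p (inr k) - x (inr k)).
Proof.
split=> [Sp|[Lp Bp]]; first by split=> [i|]; [exact: Sp (inl i) | exact: Sp (inr ord0)].
by case=> [i|o]; [exact: Lp i | exact: Bp].
Qed.

Context {A B : subset_of G} {T : forall i, subset_of (Gs i)} {U : forall j, subset_of (Hs j)}.

Local Notation tiles := (tS (tS T U) (fun _ : D => A)).

Lemma copy_join j b x p :
  copy tiles (inl (inr j)) (join b x) p <->
  lpart p = b /\ copy (tS U (fun _ : D => B)) (inl j) x (rpart p).
Proof.
rewrite /copy; split=> [[Up zp]|[<- [Up zp]]].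
  split.
    apply: functional_extensionality_dep => i; apply/eqP; rewrite -subr_eq0.
    by apply/eqP; exact: (zp (inl (inl i))).
  split=> // -[j'|k] jk; last exact: (zp (inr k)).
  by apply: (zp (inl (inr j'))); apply: contra jk => /eqP [->].
split=> // -[[i|j']|k] jk /=; first exact: subrr.
  by apply: (zp (inl j')); apply: contra jk => /eqP [->].
exact: (zp (inr k)).
Qed.

Lemma copy_unslice k c y x p :
  copy tiles (slab_index k c) (unslice k x y) p <->
  (forall s, s != inr k -> rpart p s - x s = 0) /\
  copy (tS T (fun _ : 'I_1 => A)) c y (slice k x p).
Proof.
have ek : p (inr k) - unslice k x y (inr k) = slice k x p (inr ord0) - y (inr ord0).
  by rewrite /= eqxx opprD addrA.
have off s' : s' != k -> p (inr s') - unslice k x y (inr s') = rpart p (inr s') - x (inr s').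
  by move=> /negbTE /= ->.
rewrite /copy; case: c => [i|o]; rewrite ?(ord1 o); split.
- move=> [Tp zp]; split=> [[j'|k'] jk|]; first exact: (zp (inl (inr j'))).
    by rewrite -off; [apply: (zp (inr k')) | apply: contra jk => /eqP ->].
  split=> // -[i'|o'] ii'; first by apply: (zp (inl (inl i'))); apply: contra ii' => /eqP [->].
  by rewrite (ord1 o') -ek; exact: (zp (inr k)).
- move=> [zr [Tp zs]]; split=> // -[[i'|j']|k'] ik.
  + by apply: (zs (inl i')); apply: contra ik => /eqP [->].
  + exact: (zr (inl j')).
  + have [->|kk'] := eqVneq k' k; first by rewrite ek; exact: (zs (inr ord0)).
    by rewrite off //; apply: (zr (inr k')); apply: contra kk' => /eqP [->].
- move=> [Ap zp]; split=> [[j'|k'] jk|]; first exact: (zp (inl (inr j'))).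
    rewrite -off; last by apply: contra jk => /eqP ->.
    by apply: (zp (inr k')); apply: contra jk => /eqP [->].
  split=> [|[i'|o'] io]; first by rewrite -ek.
    exact: (zp (inl (inl i'))).
  by rewrite (ord1 o') eqxx in io.
- move=> [zr [Ap zs]]; split=> [|[[i'|j']|k'] kk]; first by rewrite ek.
  + exact: (zs (inl i')).
  + exact: (zr (inl j')).
  + have kk' : k' != k by apply: contra kk => /eqP ->.
    by rewrite off //; apply: (zr (inr k')); apply: contra kk' => /eqP [->].
Qed.

Lemma tilable_box_copy (X : subset_of (prodpt Gs)) j x :
  tilable tiles (fun p => X (lpart p) /\ copy (tS U (fun _ : D => B)) (inl j) x (rpart p)).
Proof.
exists {b | X b}, (fun=> inl (inr j)), (fun b => join (proj1_sig b) x).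
pose R p := copy (tS U (fun _ : D => B)) (inl j) x (rpart p).
apply: disjoint_cover_ext (disjoint_cover_preimage lpart R (disjoint_cover_points X)).
  by move=> p; tauto.
by move=> b p; have := copy_join j (proj1_sig b) x p; tauto.
Qed.

Lemma tilable_slice k x (X : subset_of slab) :
  tilable (tS T (fun _ : 'I_1 => A)) X ->
  tilable tiles (fun p => (forall s, s != inr k -> rpart p s - x s = 0) /\ X (slice k x p)).
Proof.
move=> [Ix [c [t cov]]]; exists Ix, (fun a => slab_index k (c a)), (fun a => unslice k x (t a)).
pose R p := forall s, s != inr k -> rpart p s - x s = 0.
apply: disjoint_cover_ext (disjoint_cover_preimage (slice k x) R cov) => // a p.
exact: iff_sym (copy_unslice _ _ _ _ _).
Qed.

End Regrouping.

Theorem proposition15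
  (m n d : nat) (G : zmodType) (Gs : 'I_m -> zmodType) (Hs : 'I_n -> zmodType)
  (A B C : subset_of G)
  (T Bs : forall i, subset_of (Gs i))
  (U Cs : forall i, subset_of (Hs i)) :
  (0 < d)%N ->
  (* tiles are nonempty *)
  (exists a, A a) ->
  (forall i, exists t, T i t) ->
  (forall i, exists u, U i u) ->
  (* inclusions A ⊂ B ⊂ C, T_i ⊂ B_i, U_i ⊂ C_i *)
  (forall x, A x -> B x) -> (forall x, B x -> C x) ->
  (forall i x, T i x -> Bs i x) ->
  (forall i x, U i x -> Cs i x) ->
  (* B_1 x ... x B_m x B is (T_1,...,T_m,A)-tilable *)
  tilable (tS T (fun _ : 'I_1 => A))
          (boxset (tS Bs (fun _ : 'I_1 => B))) ->
  (* C_1 x ... x C_n x C^d is (U_1,...,U_n,B^{x d})-tilable *)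
  tilable (tS U (fun _ : 'I_d => B))
          (boxset (tS Cs (fun _ : 'I_d => C))) ->
  (* conclusion *)
  tilable (tS (tS T U) (fun _ : 'I_d => A))
          (boxset (tS (tS Bs Cs) (fun _ : 'I_d => C))).
Proof.
move=> _ _ _ _ _ _ _ _ tilB [Ix [c [t cov]]].
pose piece a p := boxset Bs (lpart p) /\
  copy (tS U (fun _ : 'I_d => B)) (c a) (t a) (rpart p).
have cov_piece : disjoint_cover piece (boxset (tS (tS Bs Cs) (fun _ : 'I_d => C))).
  apply: disjoint_cover_ext (disjoint_cover_preimage rpart (boxset Bs \o lpart) cov) => // p.
  exact: iff_sym (boxset_split _ _ _ _).
apply: (tilable_bigcup cov_piece) => a; rewrite /piece; case: (c a) => [j|k].
  exact: tilable_box_copy.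
apply: tilable_ext (tilable_slice k (t a) tilB) => p.
by have := boxset_slice Bs B k (t a) p; rewrite /copy; tauto.
Qed.
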